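(* Let $M\in\mathbb{R}^{n\times n}$ be such that the function $x\mapsto x^TMx$ belongs to the class $\mathcal{Q}$. Define $Z=\sum_{P\in\mathcal{P}} P^TMP$, where $\mathcal{P}$ is the set of all $n\times n$ permutation matrices. Then the function $x\mapsto x^TZx$ also belongs to $\mathcal{Q}$.
   Context: Fix a positive integer $n$. Let $\mathbf{e}\in\mathbb{R}^n$ be the all-ones vector. A square matrix is stochastic if it is entrywise nonnegative and each row sums to $1$. Let $\mathcal{A}\subset\mathbb{R}^{n\times n}$ be the set of stochastic matrices $A=(a_{ij})$ such that: (i) $a_{ii}>0$ for all $i$; (ii) all positive entries in any given row of $A$ are equal; (iii) $a_{ij}>0$ if and only if $a_{ji}>0$; (iv) the graph on $\{1,\dots,n\}$ with edge set $\{(i,j): a_{ij}>0\}$ is connected. The class $\mathcal{Q}$ consists of all functions $Q(x)=x^TMx$ on $\mathbb{R}^n$ where (a) $M$ is nonzero, symmetric and nonnegative definite; (b) $x^TA^TMAx\le x^TMx$ for all $A\in\mathcal{A}$ and $x\in\mathbb{R}^n$; (c) $Q(\mathbf{e})=0$ (equivalently $M\mathbf{e}=0$). For a permutation $\sigma$ of $\{1,\dots,n\}$, the permutation matrix $P_\sigma$ is defined by $(P_\sigma x)_i=x_{\sigma(i)}$; $\mathcal{P}$ is the set of all such matrices. *)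

From HB Require Import structures.
From mathcomp Require Import all_boot all_order all_algebra all_fingroup.
From mathcomp Require Import reals.
Set Implicit Arguments. Unset Strict Implicit. Unset Printing Implicit Defensive.
Import Order.TTheory GRing.Theory Num.Theory.
Local Open Scope ring_scope.

Section Defs.
Variables (R : realType) (n : nat).

Definition stochastic (A : 'M[R]_n) : Prop :=
  (forall i j, 0 <= A i j) /\ (forall i, \sum_(j < n) A i j = 1).

Definition pos_graph (A : 'M[R]_n) : rel 'I_n := fun i j => 0 < A i j.

Definition in_classA (A : 'M[R]_n) : Prop :=
  [/\ stochastic A,
      (forall i, 0 < A i i),
      (forall i j k, 0 < A i j -> 0 < A i k -> A i j = A i k),
      (forall i j, 0 < A i j <-> 0 < A j i)
    & (forall i j, connect (pos_graph A) i j)].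

Definition qform (M : 'M[R]_n) (x : 'cV[R]_n) : R := (x^T *m M *m x) 0 0.

Definition ones : 'cV[R]_n := const_mx 1.

Definition in_classQ (M : 'M[R]_n) : Prop :=
  [/\ M != 0,
      M^T = M,
      (forall x, 0 <= qform M x),
      (forall A x, in_classA A -> qform M (A *m x) <= qform M x)
    & qform M ones = 0].

End Defs.

From HB Require Import structures.
From mathcomp Require Import all_boot all_order all_algebra all_fingroup.
From mathcomp Require Import reals ring.
Import Order.TTheory GRing.Theory Num.Theory.
Local Open Scope ring_scope.

(* Since (P^T M P) gives the form x |-> Q(Px), the form of Z is the sum of the
   forms x |-> Q(Px) over all permutations P.  Each condition defining the class
   Q is therefore inherited term by term: nonnegativity and Q(e) = 0 because
   Pe = e; monotonicity because P A x = (P A P^T) P x and conjugating A by a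
   permutation keeps it in the class A; and Z <> 0 because a sum of nonnegative
   forms vanishes only if each does, in particular the term x |-> Q(x), whereas
   a symmetric M with vanishing form is 0 by polarization. *)

Lemma connect_relpre {T : finType} {e : rel T} {s : {perm T}} {x y : T} :
  connect e (s x) (s y) -> connect [rel u v | e (s u) (s v)] x y.
Proof.
move=> /connectP [p ep sy].
elim: p x ep sy => [|z p IHp] x /=; first by move=> _ /perm_inj ->.
case/andP=> exz ep sy.
apply: connect_trans (IHp ((s^-1)%g z) _ _); rewrite ?permKV //.
by apply: connect1; rewrite /= permKV.
Qed.

Section QuadraticForms.
Variables (R : realType) (n : nat).
Implicit Types (M A P : 'M[R]_n) (x y : 'cV[R]_n).

Definition bform M x y : R := (x^T *m M *m y) 0 0.

Lemma bformC M x y : M^T = M -> bform M x y = bform M y x.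
Proof.
move=> sM; rewrite /bform; have -> : y^T *m M *m x = (x^T *m M *m y)^T.
  by rewrite !trmx_mul trmxK sM mulmxA.
by rewrite [RHS]mxE.
Qed.

Lemma qformD M x y :
  qform M (x + y) = qform M x + qform M y + bform M x y + bform M y x.
Proof. by rewrite /qform /bform !linearD /= !mulmxDl !mxE; ring. Qed.

Lemma bform_delta M i j : bform M (delta_mx i 0) (delta_mx j 0) = M i j.
Proof. by rewrite /bform trmx_delta -rowE -colE !mxE. Qed.

Lemma qform_eq0_sym M : M^T = M -> (forall x, qform M x = 0) -> M = 0.
Proof.
move=> sM M0; apply/matrixP => i j; rewrite mxE.
have := M0 (delta_mx i 0 + delta_mx j 0).
rewrite qformD !M0 (@bformC _ (delta_mx j 0) _ sM) bform_delta !add0r -mulr2n.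
by move/eqP; rewrite mulrn_eq0 /= => /eqP.
Qed.

Lemma qform_sum (I : finType) (F : I -> 'M[R]_n) x :
  qform (\sum_i F i) x = \sum_i qform (F i) x.
Proof. by rewrite /qform mulmx_sumr mulmx_suml summxE. Qed.

Lemma qform_conj M P x : qform (P^T *m M *m P) x = qform M (P *m x).
Proof. by rewrite /qform trmx_mul !mulmxA. Qed.

Lemma perm_mx_ones (s : 'S_n) : perm_mx s *m ones R n = ones R n.
Proof. by rewrite -row_permE; apply/matrixP => i j; rewrite !mxE. Qed.

Lemma perm_mx_mulmx (s : 'S_n) A x :
  perm_mx s *m (A *m x) = row_perm s (col_perm s A) *m (perm_mx s *m x).
Proof.
rewrite row_permE col_permE -!mulmxA (mulmxA (perm_mx s^-1)).
by rewrite -perm_mxM mulVg perm_mx1 mul1mx.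
Qed.

Lemma in_classA_perm (s : 'S_n) A :
  in_classA A -> in_classA (row_perm s (col_perm s A)).
Proof.
have E i j : row_perm s (col_perm s A) i j = A (s i) (s j) by rewrite !mxE.
case=> [[A_ge0 A_sum] A_diag A_row A_sym A_conn].
split=> [|i|i j k|i j|i j]; rewrite ?E //; last first.
- apply: (connect_sub _ (connect_relpre (A_conn (s i) (s j)))) => u v /= Auv.
  by apply: connect1; rewrite /pos_graph E.
- exact: A_row.
split=> [i j|i]; rewrite ?E //.
rewrite -(A_sum (s i)) [RHS](reindex_inj (@perm_inj _ s)).
by apply: eq_bigr => j _; rewrite E.
Qed.

Lemma qform_perm_sum M x :
  qform (\sum_(s : 'S_n) (perm_mx s)^T *m M *m perm_mx s) x
  = \sum_(s : 'S_n) qform M (perm_mx s *m x).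
Proof. by rewrite qform_sum; apply: eq_bigr => s _; rewrite qform_conj. Qed.

End QuadraticForms.

Theorem lemma1 (R : realType) (n : nat) (M : 'M[R]_n) :
  in_classQ M ->
  in_classQ (\sum_(s : 'S_n) (perm_mx s)^T *m M *m perm_mx s).
Proof.
case=> M_neq0 sM M_ge0 M_mono M_ones.
split; rewrite ?qform_perm_sum.
- apply: contra M_neq0 => /eqP Z0; apply/eqP; apply: qform_eq0_sym => // x.
  have /psumr_eq0P Zx0 : \sum_(s : 'S_n) qform M (perm_mx s *m x) = 0.
    by rewrite -qform_perm_sum Z0 /qform mulmx0 mul0mx mxE.
  by have := Zx0 (fun s _ => M_ge0 _) 1%g isT; rewrite perm_mx1 mul1mx.
- rewrite raddf_sum; apply: eq_bigr => s _.
  by rewrite /= !trmx_mul trmxK sM mulmxA.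
- by move=> x; rewrite qform_perm_sum sumr_ge0.
- move=> A x A_in; rewrite !qform_perm_sum; apply: ler_sum => s _.
  by rewrite perm_mx_mulmx; apply/M_mono/in_classA_perm.
- by rewrite big1 // => s _; rewrite perm_mx_ones.
Qed.
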